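(* Let $R\subseteq\mathbb N$ be infinite. Then $R$ is sparse if and only if $R$ is regular.
   Context: Enumerate $R$ increasingly as $(r_n)_{n\in\mathbb N}$; $\sigma:R\to R$ is the successor map $\sigma(r_n)=r_{n+1}$, $\sigma^k$ its $k$-fold iterate ($\sigma^0=\mathrm{id}$). An operator on $R$ is a function $R\to\mathbb Z$, $z\mapsto a_m\sigma^m(z)+\dots+a_0\sigma^0(z)$ with $a_i\in\mathbb Z$. For an operator $A$: $A=_R0$ if $Az=0$ for all $z\in R$; $A>_R0$ (resp. $A<_R0$) if $Az>0$ (resp. $Az<0$) for all but finitely many $z\in R$. $R$ is sparse if every operator $A$ satisfies (S1) $A=_R0$ or $A>_R0$ or $A<_R0$; and (S2) if $A>_R0$ then there is $\Delta\in\mathbb N$ with $A(\sigma^\Delta z)>z$ for all $z\in R$. $R$ is regular if $r_{n+1}/r_n\to\theta$ for some $\theta\in\mathbb R_{>1}\cup\{\infty\}$ and, whenever $\theta$ is algebraic over $\mathbb Q$ with minimal polynomial $f(x)=\sum_{i=0}^ka_ix^i$, we have $\sum_{i=0}^ka_ir_{n+i}=0$ for all $n\in\mathbb N$. *)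

From HB Require Import structures.
From mathcomp Require Import all_boot all_order all_algebra.
From mathcomp Require Import all_classical all_reals all_analysis.
From mathcomp Require Import Rstruct Rstruct_topology.
Set Implicit Arguments. Unset Strict Implicit. Unset Printing Implicit Defensive.
Import Order.TTheory GRing.Theory Num.Theory.
Local Open Scope classical_set_scope.
Local Open Scope ring_scope.

Notation Real := Rdefinitions.R.

Definition increasing_enum (S : set nat) (r : nat -> nat) : Prop :=
  (forall n, (r n < r n.+1)%N) /\ (forall m, S m <-> exists n, r n = m).

(* An operator A z = a_m σ^m z + ... + a_0 σ^0 z, with coefficient list
   a = [:: a_0; ...; a_m], evaluated at z = r_n (so σ^i z = r_(n+i)). *)
Definition op_at (a : seq int) (r : nat -> nat) (n : nat) : int :=
  \sum_(i < size a) a`_i * (r (n + i)%N)%:Z.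

Definition op_eq0 (a : seq int) (r : nat -> nat) : Prop :=
  forall n, op_at a r n = 0.
Definition op_pos (a : seq int) (r : nat -> nat) : Prop :=
  exists N, forall n, (N <= n)%N -> 0 < op_at a r n.
Definition op_neg (a : seq int) (r : nat -> nat) : Prop :=
  exists N, forall n, (N <= n)%N -> op_at a r n < 0.

(* Sparseness (S1) and (S2); A(σ^Δ z) for z = r_n is op_at a r (n + Δ). *)
Definition sparse (r : nat -> nat) : Prop :=
  forall a : seq int,
    (op_eq0 a r \/ op_pos a r \/ op_neg a r) /\
    (op_pos a r -> exists D : nat, forall n, (r n)%:Z < op_at a r (n + D)%N).

Definition ratio_seq (r : nat -> nat) : nat -> Real :=
  fun n => (r n.+1)%:R / (r n)%:R.

Definition is_min_poly (theta : Real) (f : {poly rat}) : Prop :=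
  f \is monic /\ root (map_poly ratr f) theta /\
  forall g : {poly rat}, g != 0 -> root (map_poly ratr g) theta ->
    (size f <= size g)%N.

Definition regular (r : nat -> nat) : Prop :=
  (ratio_seq r @ \oo --> +oo) \/
  (exists theta : Real, 1 < theta /\ ratio_seq r @ \oo --> theta /\
     forall f : {poly rat}, is_min_poly theta f ->
       forall n, \sum_(i < size f) f`_i * (r (n + i)%N)%:R = 0 :> rat).

(* Applying (S1) to [b σ - a] shows that every rational a/b is
   eventually either below or above the ratio r_(n+1)/r_n, so the ratio converges to some
   θ ∈ [1, ∞].  If the characteristic polynomial p of an operator A vanishes at θ < ∞, then
   A r_(n+Δ) = o(r_(n+Δ)) = o(r_n), which contradicts (S2) for A and for -A; so (S1) forces
   A =_R 0.  Applied to σ - 1 this excludes θ = 1, and applied to the minimal polynomial of θ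
   it gives the recurrence.  A r_n / r_n tends to p(θ), and for θ = ∞ the leading term of A
   dominates.  When this limit is nonzero, A r_n has eventually a constant sign and
   |A r_n| ≥ c r_n, which together with the geometric growth of r gives (S1) and (S2).  When
   p(θ) = 0, the minimal polynomial of θ divides p, so A inherits its recurrence and vanishes. *)

From HB Require Import structures.
From mathcomp Require Import all_boot all_order all_algebra.
From mathcomp Require Import all_classical all_reals all_analysis.
From mathcomp Require Import Rstruct Rstruct_topology.
From mathcomp Require Import ring lra zify.
Set Implicit Arguments. Unset Strict Implicit. Unset Printing Implicit Defensive.
Import Order.TTheory GRing.Theory Num.Theory.
Local Open Scope classical_set_scope.
Local Open Scope ring_scope.

Local Notation rR r n := ((r n)%:R : Rdefinitions.R).

Section IncreasingEnumeration.
Variable r : nat -> nat.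
Hypothesis r_incr : forall n, (r n < r n.+1)%N.

Lemma enum_homo : {homo r : m n / (m <= n)%N}.
Proof. exact: homo_leq leqnn leq_trans (fun n => ltnW (r_incr n)). Qed.

Lemma enum_geq_index n : (n <= r n)%N.
Proof. by elim: n => // n IH; apply: leq_ltn_trans IH (r_incr n). Qed.

Lemma ler_enumR m n : (m <= n)%N -> rR r m <= rR r n.
Proof. by move=> mn; rewrite ler_nat enum_homo. Qed.

Lemma enumR_gt0 n : (0 < n)%N -> 0 < rR r n.
Proof. by move=> n0; rewrite ltr0n (leq_trans n0 (enum_geq_index n)). Qed.

Lemma ratio_seq_ge mu n : (0 < n)%N ->
  (mu <= ratio_seq r n) = (mu * rR r n <= rR r n.+1).
Proof. by move=> n0; rewrite /ratio_seq ler_pdivlMr // enumR_gt0. Qed.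

Lemma ratio_seq_gt mu n : (0 < n)%N ->
  (mu < ratio_seq r n) = (mu * rR r n < rR r n.+1).
Proof. by move=> n0; rewrite /ratio_seq ltr_pdivlMr // enumR_gt0. Qed.

Lemma ratio_seq_gt1 n : (0 < n)%N -> 1 < ratio_seq r n.
Proof. by move=> n0; rewrite ratio_seq_gt // mul1r ltr_nat. Qed.

Section GeometricGrowth.
Variables (mu : Rdefinitions.R) (N0 : nat).
Hypothesis mu_gt1 : 1 < mu.
Hypothesis enumR_geometric : forall n, (N0 <= n)%N -> mu * rR r n <= rR r n.+1.

Lemma enumR_linear_growth n d : (N0 <= n)%N ->
  (1 + d%:R * (mu - 1)) * rR r n <= rR r (n + d)%N.
Proof.
move=> n_ge; elim: d => [|d IH]; first by rewrite ?addn0 mul0r addr0 mul1r.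
have step : mu * rR r (n + d)%N <= rR r (n + d).+1.
  by apply: enumR_geometric; apply: leq_trans n_ge (leq_addr _ _).
rewrite addnS -natr1; apply: le_trans step.
have := ler_wpM2l (ltW (lt_trans ltr01 mu_gt1)) IH.
have : 0 <= d%:R * (mu - 1) ^+ 2 * rR r n.
  by apply: mulr_ge0 => //; apply: mulr_ge0 => //; exact: sqr_ge0.
nra.
Qed.

Lemma enumR_shift_dominates c : 0 < c ->
  exists D : nat, forall n d, (D <= d)%N -> rR r n < c * rR r (n + d)%N.
Proof.
move=> c0; set M := maxn N0 1.
have cmu0 : 0 < c * (mu - 1) by rewrite mulr_gt0 // subr_gt0.
set K := rR r M / c + (c * (mu - 1))^-1.
have xM0 : 0 <= rR r M / c by rewrite divr_ge0 // ltW.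
have K0 : 0 <= K by rewrite addr_ge0 // invr_ge0 ltW.
(* Linear growth handles n >= M; for n < M, r_n <= r_M < c d <= c r_(n+d). *)
exists (Num.Def.archi_bound K) => n d d_ge.
have dK : K < d%:R.
  by apply: lt_le_trans (archi_boundP K0) _; rewrite ler_nat.
have d_large : 1 < d%:R * (c * (mu - 1)).
  rewrite -ltr_pdivrMr // div1r; have : 0 <= (c * (mu - 1))^-1 by rewrite invr_ge0 ltW.
  rewrite /K in dK; lra.
have xM_lt : rR r M < d%:R * c.
  rewrite -ltr_pdivrMr //; have : 0 < (c * (mu - 1))^-1 by rewrite invr_gt0.
  rewrite /K in dK; lra.
have d_le : d%:R <= rR r (n + d)%N.
  by rewrite ler_nat (leq_trans (enum_geq_index d)) ?enum_homo ?leq_addl.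
have [M_le|n_lt] := leqP M n.
- have := enumR_linear_growth d (leq_trans (leq_maxl _ _) M_le).
  have := enumR_gt0 (leq_trans (leq_maxr _ _) M_le); nra.
- have : rR r n <= rR r M by apply: ler_enumR; apply: ltnW.
  nra.
Qed.

End GeometricGrowth.
End IncreasingEnumeration.

Lemma op_at_opp (a : seq int) r n : op_at (map -%R a) r n = - op_at a r n.
Proof.
rewrite /op_at size_map -sumrN; apply: eq_bigr => i _.
by rewrite (nth_map 0) // mulNr.
Qed.

Lemma op_at_pair (u v : int) r n :
  op_at [:: u; v] r n = u * (r n)%:Z + v * (r n.+1)%:Z.
Proof. by rewrite /op_at !big_ord_recr big_ord0 /= add0r addn0 addn1. Qed.

Definition poly_op (r : nat -> nat) (p : {poly rat}) (n : nat) : rat :=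
  \sum_(i < size p) p`_i * (r (n + i)%N)%:R.

Definition op_poly (a : seq int) : {poly rat} := \poly_(i < size a) (a`_i)%:~R.

Section PolyOperator.
Variable r : nat -> nat.

Lemma poly_op_wide (p : {poly rat}) n k : (size p <= k)%N ->
  poly_op r p n = \sum_(i < k) p`_i * (r (n + i)%N)%:R.
Proof.
move=> pk; rewrite -(subnKC pk) big_split_ord /= [X in _ + X]big1 ?addr0 //.
by move=> i _; rewrite nth_default ?mul0r ?leq_addr.
Qed.

Lemma poly_opD p q n : poly_op r (p + q) n = poly_op r p n + poly_op r q n.
Proof.
have le_pq := leq_addr (size q) (size p); have le_qp := leq_addl (size p) (size q).
rewrite !(@poly_op_wide _ _ (size p + size q)) //; last first.
  by apply: leq_trans (size_polyD _ _) _; rewrite geq_max le_pq le_qp.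
by rewrite -big_split; apply: eq_bigr => i _; rewrite coefD mulrDl.
Qed.

Lemma poly_opZ c p n : poly_op r (c *: p) n = c * poly_op r p n.
Proof.
rewrite (@poly_op_wide _ _ (size p)) ?size_scale_leq // mulr_sumr.
by apply: eq_bigr => i _; rewrite coefZ mulrA.
Qed.

Lemma poly_opMX p n : poly_op r (p * 'X) n = poly_op r p n.+1.
Proof.
have size_pX : (size (p * 'X)%R <= (size p).+1)%N.
  by have [->|p0] := eqVneq p 0; rewrite ?mul0r ?size_poly0 // size_mulX.
rewrite (poly_op_wide _ size_pX) big_ord_recl coefMX /= mul0r add0r.
by apply: eq_bigr => i _; rewrite coefMX /= addnS addSn.
Qed.

Lemma poly_op_mull_eq0 f q : (forall n, poly_op r f n = 0) ->
  forall n, poly_op r (q * f) n = 0.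
Proof.
move=> f0; elim/poly_ind: q => [|q c IH] n.
  by rewrite mul0r /poly_op size_poly0 big_ord0.
by rewrite mulrDl mulrAC poly_opD poly_opMX IH mul_polyC poly_opZ f0 mulr0 addr0.
Qed.

Lemma op_at_poly (a : seq int) n : (op_at a r n)%:~R = poly_op r (op_poly a) n.
Proof.
rewrite /op_at rmorph_sum (@poly_op_wide _ _ (size a)) ?size_poly //=.
by apply: eq_bigr => i _; rewrite coef_poly ltn_ord intrM -pmulrn.
Qed.

Lemma op_at_ratr (a : seq int) n :
  (op_at a r n)%:~R = ratr (poly_op r (op_poly a) n) :> Rdefinitions.R.
Proof. by rewrite -op_at_poly ratr_int. Qed.

Lemma ratr_poly_op p n :
  ratr (poly_op r p n) = \sum_(i < size p) ratr p`_i * rR r (n + i)%N.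
Proof. by rewrite rmorph_sum; apply: eq_bigr => i _; rewrite rmorphM rmorph_nat. Qed.

End PolyOperator.

Lemma op_poly_opp (a : seq int) : op_poly (map -%R a) = - op_poly a.
Proof.
by apply/polyP => i; rewrite coefN !coef_poly size_map; case: ltnP => // i_lt;
  rewrite (nth_map 0) // intrN.
Qed.

Lemma op_poly_scale (p : {poly rat}) :
  exists (a : seq int) (c : rat), c != 0 /\ p = c *: op_poly a.
Proof.
have [q [al al0 ->]] := rat_poly_scale p.
exists q, al%:~R^-1; split; first by rewrite invr_eq0 intr_eq0.
by congr (_ *: _); apply/polyP => i; rewrite coef_map coef_poly.
Qed.

Lemma cvg_near_eq (f g : nat -> Rdefinitions.R) (l : Rdefinitions.R) :
  {near \oo, f =1 g} -> g @ \oo --> l -> f @ \oo --> l.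
Proof. by move=> fg gl; apply: cvg_trans gl; apply: near_eq_cvg; apply: filterS fg. Qed.

Section RatioLimit.
Variable r : nat -> nat.
Hypothesis r_incr : forall n, (r n < r n.+1)%N.

Lemma poly_op_ratio_cvg_weights (p : {poly rat}) (z l : nat -> Rdefinitions.R) :
  (forall i, (i < size p)%N -> (fun n => rR r (n + i)%N / z n) @ \oo --> l i) ->
  (fun n => ratr (poly_op r p n) / z n) @ \oo --> \sum_(i < size p) ratr p`_i * l i.
Proof.
move=> cvg_weight.
have -> : (fun n => ratr (poly_op r p n) / z n) =
    (fun n => \sum_(i < size p) ratr p`_i * (rR r (n + i)%N / z n)).
  apply: funext => n; rewrite ratr_poly_op mulr_suml.
  by apply: eq_bigr => i _; rewrite mulrA.
(* The topological lemmas below need the normed-module view [R^o] of the reals. *)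
apply: cvg_big => [|i _]; first exact: (@add_continuous Rdefinitions.R^o).
exact: cvgMr (cvg_weight _ (ltn_ord i)).
Qed.

Section FiniteLimit.
Variable theta : Rdefinitions.R.
Hypothesis ratio_cvg : ratio_seq r @ \oo --> theta.

Lemma ratio_shift_cvg i : (fun n => rR r (n + i)%N / rR r n) @ \oo --> theta ^+ i.
Proof.
elim: i => [|i IH].
  apply: (@cvg_near_eq _ (fun=> 1)); last exact: cvg_cst.
  by near=> n; rewrite addn0 divff // gt_eqF // enumR_gt0 //; near: n; exists 1%N.
apply: (@cvg_near_eq _ (fun n => ratio_seq r (n + i)%N * (rR r (n + i)%N / rR r n))).
  near=> n; rewrite /ratio_seq mulrA divfK ?addnS // gt_eqF // enumR_gt0 //.
  by rewrite addn_gt0; apply/orP; left; near: n; exists 1%N.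
by rewrite exprS; apply: cvgM => //; rewrite (cvg_shiftn i).
Unshelve. all: by end_near.
Qed.

Lemma poly_op_ratio_cvg p :
  (fun n => ratr (poly_op r p n) / rR r n) @ \oo --> (map_poly ratr p).[theta].
Proof.
rewrite horner_coef size_map_poly; under eq_bigr do rewrite coef_map.
by apply: poly_op_ratio_cvg_weights => i _; apply: ratio_shift_cvg.
Qed.

End FiniteLimit.

Section InfiniteLimit.
Hypothesis ratio_cvgy : ratio_seq r @ \oo --> +oo.

Lemma ratio_shift_cvg0 i m : (i < m)%N ->
  (fun n => rR r (n + i)%N / rR r (n + m)%N) @ \oo --> (0 : Rdefinitions.R).
Proof.
move=> im; suff : (fun n => rR r (n + i)%N / rR r (n + m)%N : Rdefinitions.R^o) @ \oo -->
  (0 : Rdefinitions.R^o) by [].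
apply/cvgrPdist_le => e e0.
have [N _ ratio_ge] := (cvgryPge _).1 ratio_cvgy e^-1.
exists (maxn N 1) => // n /=; rewrite geq_max => /andP[Nn n_gt0].
set k := (n + m).-1.
have k_pos : (0 < k)%N by rewrite /k; lia.
have kS : k.+1 = (n + m)%N by rewrite /k; lia.
have i_le : rR r (n + i)%N <= rR r k.
  by apply: (ler_enumR r_incr); rewrite /k; lia.
have n_le_k : (n <= k)%N by rewrite /k; lia.
have := ratio_ge k (leq_trans Nn n_le_k); rewrite /= ratio_seq_ge // kS => ratio_k.
have x_gt0 : 0 < rR r (n + m)%N by apply: (enumR_gt0 r_incr); rewrite addn_gt0 n_gt0.
rewrite sub0r normrN ger0_norm ?divr_ge0 // ler_pdivrMr //.
have := ler_wpM2l (ltW e0) ratio_k; rewrite mulrA mulfV ?gt_eqF // mul1r.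
lra.
Qed.

Lemma poly_op_lead_cvg p : p != 0 ->
  (fun n => ratr (poly_op r p n) / rR r (n + (size p).-1)%N) @ \oo -->
  (ratr (lead_coef p) : Rdefinitions.R).
Proof.
move=> p0; set m := (size p).-1.
have size_p : size p = m.+1 by rewrite prednK // size_poly_gt0.
have -> : ratr (lead_coef p) =
    \sum_(i < size p) ratr p`_i * (i == m :> nat)%:R :> Rdefinitions.R.
  rewrite size_p big_ord_recr /= eqxx mulr1 big1 ?add0r ?lead_coefE //.
  by move=> i _; rewrite (ltn_eqF (ltn_ord i)) mulr0.
apply: (poly_op_ratio_cvg_weights (l := fun i => (i == m)%:R)) => i.
rewrite size_p ltnS leq_eqVlt => /orP[/eqP ->|im].
  rewrite eqxx; apply: (@cvg_near_eq _ (fun=> 1)); last exact: cvg_cst.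
  near=> n; rewrite divff // gt_eqF // (enumR_gt0 r_incr) // addn_gt0.
  by apply/orP; left; near: n; exists 1%N.
by rewrite (ltn_eqF im); apply: ratio_shift_cvg0.
Unshelve. all: by end_near.
Qed.

End InfiniteLimit.
End RatioLimit.

Section MinimalPolynomial.
Variable theta : Rdefinitions.R.

Lemma min_poly_exists P : P != 0 -> root (map_poly ratr P) theta ->
  exists f, is_min_poly theta f.
Proof.
move=> P0 P_root.
pose has_root_of_size k := `[< exists g : {poly rat},
  [/\ g != 0, root (map_poly ratr g) theta & size g = k] >].
have ex_size : exists k, has_root_of_size k by exists (size P); apply/asboolP; exists P.
case: (ex_minnP ex_size) => k /asboolP [g [g0 g_root <-]] g_min.
have lc0 : lead_coef g != 0 by rewrite lead_coef_eq0.
exists ((lead_coef g)^-1 *: g); split; [|split].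
- by rewrite monicE lead_coefZ mulVf.
- by rewrite map_polyZ rootZ // fmorph_eq0 invr_eq0.
- move=> h h0 h_root; rewrite size_scale ?invr_eq0 //; apply: g_min.
  by apply/asboolP; exists h.
Qed.

Lemma min_poly_dvdp f P : is_min_poly theta f -> root (map_poly ratr P) theta ->
  f %| P.
Proof.
case=> f_monic [f_root f_min] P_root; apply/modp_eq0P.
have [//|mod0] := eqVneq (P %% f) 0.
have mod_root : root (map_poly ratr (P %% f)) theta.
  move: P_root; rewrite {1}(divp_eq P f) /root rmorphD rmorphM /= hornerD hornerM.
  by rewrite (eqP f_root) mulr0 add0r.
by have := f_min _ mod0 mod_root; rewrite leqNgt ltn_modp monic_neq0.
Qed.

End MinimalPolynomial.

Section SparseToRegular.
Variable r : nat -> nat.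
Hypothesis r_incr : forall n, (r n < r n.+1)%N.
Hypothesis r_sparse : sparse r.

Section RootOperators.
Variable theta : Rdefinitions.R.
Hypothesis ratio_cvg : ratio_seq r @ \oo --> theta.

Lemma root_op_not_pos a : root (map_poly ratr (op_poly a)) theta -> ~ op_pos a r.
Proof.
move=> /eqP a_root /(r_sparse a).2 [D op_shift_gt].
have op_ratio := poly_op_ratio_cvg r_incr ratio_cvg (p := op_poly a).
rewrite a_root -(cvg_shiftn D) in op_ratio.
have := cvgM op_ratio (ratio_shift_cvg r_incr ratio_cvg (i := D)); rewrite mul0r => cvg0.
have [N _ small] := cvgr_lt _ (cvg0 _) 1 ltr01.
pose n := maxn N 1.
have xn_gt0 : 0 < rR r n by rewrite (enumR_gt0 r_incr) ?leq_maxr.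
have xnD_gt0 : 0 < rR r (n + D)%N by rewrite (enumR_gt0 r_incr) // addn_gt0 leq_maxr.
have := small n (leq_maxl _ _); rewrite /= mulrA divfK ?gt_eqF //.
rewrite ltr_pdivrMr // mul1r -op_at_ratr.
have := op_shift_gt n; rewrite -(ltr_int Rdefinitions.R) -pmulrn.
lra.
Qed.

Lemma root_op_eq0 a : root (map_poly ratr (op_poly a)) theta -> op_eq0 a r.
Proof.
move=> a_root.
have [//|[/(root_op_not_pos a_root)//|[N op_neg]]] := (r_sparse a).1.
exfalso; apply: (@root_op_not_pos (map -%R a)).
  by rewrite op_poly_opp raddfN rootN.
by exists N => n /op_neg; rewrite op_at_opp oppr_gt0.
Qed.

Lemma root_poly_op_eq0 p n : root (map_poly ratr p) theta -> poly_op r p n = 0.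
Proof.
move=> p_root; have [a [c [c0 p_eq]]] := op_poly_scale p.
have a_root : root (map_poly ratr (op_poly a)) theta.
  by move: p_root; rewrite p_eq map_polyZ rootZ // fmorph_eq0.
by rewrite p_eq poly_opZ -op_at_poly (root_op_eq0 a_root n) mulr0.
Qed.

End RootOperators.

Lemma ratr_lt_ratio_seq q n : (0 < n)%N ->
  (ratr q < ratio_seq r n) = (0 < op_at [:: - numq q; denq q] r n).
Proof.
move=> n0; rewrite ratio_seq_gt // op_at_pair -(ltr0z Rdefinitions.R).
rewrite intrD !intrM intrN -!pmulrn /ratr mulrAC ltr_pdivrMr ?ltr0z ?denq_gt0 //.
by rewrite mulNr addrC subr_gt0 [_ * (denq q)%:~R]mulrC.
Qed.

Lemma sparse_ratio_side q : (\forall n \near \oo, ratr q < ratio_seq r n) \/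
  (\forall n \near \oo, ratio_seq r n <= ratr q).
Proof.
have [op0|[[N op_pos]|[N op_neg]]] := (r_sparse [:: - numq q; denq q]).1.
- by right; exists 1%N => // n n0; rewrite leNgt ratr_lt_ratio_seq // op0.
- left; exists (maxn N 1) => // n /=; rewrite geq_max => /andP[Nn n0].
  by rewrite ratr_lt_ratio_seq // op_pos.
- right; exists (maxn N 1) => // n /=; rewrite geq_max => /andP[Nn n0].
  by rewrite leNgt ratr_lt_ratio_seq // ltNge ltW // op_neg.
Qed.

Lemma sparse_ratio_cvg : ratio_seq r @ \oo --> +oo \/
  exists2 theta : Rdefinitions.R, 1 <= theta & ratio_seq r @ \oo --> theta.
Proof.
pose E := [set y : Rdefinitions.R | \forall n \near \oo, y < ratio_seq r n].
have E1 : E 1 by exists 1%N => // n; apply: ratio_seq_gt1.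
have [E_ub|E_unbounded] := pselect (has_ubound E); last first.
  left; apply/cvgryPge => A.
  have [y Ey Ay] : exists2 y, E y & A < y.
    apply: contrapT => noy; apply: E_unbounded; exists A => y Ey.
    by rewrite leNgt; apply/negP => Ay; apply: noy; exists y.
  by apply: filterS Ey => n /ltW; apply: le_trans; apply: ltW.
right; exists (sup E); first exact: ub_le_sup.
suff : (ratio_seq r : nat -> Rdefinitions.R^o) @ \oo --> (sup E : Rdefinitions.R^o) by [].
apply/cvgrPdist_lt => e e0.
have [y Ey sup_lt_y] := sup_adherent e0 (conj (ex_intro _ 1 E1) E_ub).
have [q] : exists q : rat, ratr q \in `]sup E, sup E + e[ by apply: rat_in_itvoo; lra.
rewrite in_itv /= => /andP[sup_lt_q q_lt].
have ratio_le : \forall n \near \oo, ratio_seq r n <= ratr q.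
  have [q_lb|//] := sparse_ratio_side q.
  by have := ub_le_sup E_ub q_lb; lra.
apply: filterS2 Ey ratio_le => n y_lt le_q.
by rewrite ltr_distl; apply/andP; split; lra.
Qed.

Lemma sparse_regular : regular r.
Proof.
have [|[theta theta_ge1 ratio_cvg]] := sparse_ratio_cvg; first by left.
right; exists theta; split; last split => //.
- rewrite lt_neqAle theta_ge1 andbT; apply/eqP => theta1.
  have root1 : root (map_poly ratr (op_poly [:: -1; 1])) theta.
    rewrite /root -theta1 -(rmorph1 ratr) horner_map fmorph_eq0 horner_poly /=.
    by rewrite !big_ord_recr big_ord0 /= !expr1n !mulr1 add0r intrN addNr.
  move/(_ 0%N): (root_op_eq0 ratio_cvg root1); rewrite op_at_pair mulN1r mul1r.
  by move/eqP; rewrite addrC subr_eq0 eqz_nat gtn_eqF.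
- by move=> f [_ [f_root _]] n; exact: (root_poly_op_eq0 ratio_cvg n f_root).
Qed.

End SparseToRegular.

(* A strengthening of (S1) from which (S2) follows by the geometric growth of r. *)
Definition op_linear_sign (a : seq int) (r : nat -> nat) : Prop :=
  op_eq0 a r \/ exists2 c : Rdefinitions.R, 0 < c &
    (\forall n \near \oo, c * rR r n < (op_at a r n)%:~R) \/
    (\forall n \near \oo, (op_at a r n)%:~R < - (c * rR r n)).

Section RegularToSparse.
Variable r : nat -> nat.
Hypothesis r_incr : forall n, (r n < r n.+1)%N.

Lemma op_eq0_poly a : (forall n, poly_op r (op_poly a) n = 0) -> op_eq0 a r.
Proof. by move=> op0 n; apply: (@intr_inj rat); rewrite op_at_poly op0. Qed.

Lemma op_linear_sign_of_cvg a (z : nat -> Rdefinitions.R) (L : Rdefinitions.R) :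
  L != 0 -> (\forall n \near \oo, rR r n <= z n) ->
  (fun n => (op_at a r n)%:~R / z n) @ \oo --> L -> op_linear_sign a r.
Proof.
move=> L0 z_ge op_cvg; right.
exists (`|L| / 2); first by rewrite divr_gt0 ?normr_gt0.
have x_pos : \forall n \near \oo, 0 < rR r n by exists 1%N => // n; apply: enumR_gt0.
have [L_lt0|L_gt0|] := ltgtP L 0; last by move/eqP: L0.
- right; have half : L < L / 2 by lra.
  apply: filterS3 x_pos z_ge (cvgr_lt _ op_cvg _ half) => n xn zn.
  rewrite ltr_pdivrMr ?(lt_le_trans xn) // ltr0_norm //; nra.
- left; have half : L / 2 < L by lra.
  apply: filterS3 x_pos z_ge (cvgr_gt _ op_cvg _ half) => n xn zn.
  rewrite ltr_pdivlMr ?(lt_le_trans xn) // gtr0_norm //; nra.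
Qed.

Lemma op_linear_sign_algebraic theta a :
  ratio_seq r @ \oo --> theta ->
  (forall f, is_min_poly theta f -> forall n, poly_op r f n = 0) ->
  op_linear_sign a r.
Proof.
move=> ratio_cvg min_rel; set P := op_poly a.
have [P_root|P_nroot] := boolP (root (map_poly ratr P) theta).
  left; apply: op_eq0_poly => n; rewrite -/P.
  have [P0|P0] := eqVneq P 0; first by rewrite P0 /poly_op size_poly0 big_ord0.
  have [f f_min] := min_poly_exists P0 P_root.
  rewrite -(divpK (min_poly_dvdp f_min P_root)).
  exact: (poly_op_mull_eq0 _ (min_rel f f_min)).
apply: (op_linear_sign_of_cvg (z := fun n => rR r n)) P_nroot _ _.
  by exists 0%N.
have -> : (fun n => (op_at a r n)%:~R / rR r n) =
    (fun n => ratr (poly_op r P n) / rR r n).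
  by apply/funext => n; rewrite op_at_ratr.
exact: poly_op_ratio_cvg.
Qed.

Lemma op_linear_sign_ratio_oo a : ratio_seq r @ \oo --> +oo -> op_linear_sign a r.
Proof.
move=> ratio_cvgy; set P := op_poly a.
have [P0|P0] := eqVneq P 0.
  by left; apply: op_eq0_poly => n; rewrite -/P P0 /poly_op size_poly0 big_ord0.
apply: (op_linear_sign_of_cvg (z := fun n => rR r (n + (size P).-1)%N)
  (L := ratr (lead_coef P))).
- by rewrite fmorph_eq0 lead_coef_eq0.
- by exists 0%N => // n _; apply: (ler_enumR r_incr); apply: leq_addr.
have -> : (fun n => (op_at a r n)%:~R / rR r (n + (size P).-1)%N) =
    (fun n => ratr (poly_op r P n) / rR r (n + (size P).-1)%N).
  by apply/funext => n; rewrite op_at_ratr.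
exact: poly_op_lead_cvg.
Qed.

Lemma regular_op_linear_sign a : regular r -> op_linear_sign a r.
Proof.
case=> [|[theta [_ [ratio_cvg min_rel]]]]; first exact: op_linear_sign_ratio_oo.
exact: op_linear_sign_algebraic ratio_cvg min_rel.
Qed.

Lemma regular_geometric : regular r -> exists mu N0, 1 < mu /\
  forall n, (N0 <= n)%N -> mu * rR r n <= rR r n.+1.
Proof.
move=> r_reg; have [mu mu_gt1 [N _ ratio_gt]] :
    exists2 mu : Rdefinitions.R, 1 < mu & \forall n \near \oo, mu < ratio_seq r n.
  case: r_reg => [ratio_cvgy|[theta [theta_gt1 [ratio_cvg _]]]].
    exists 2; first lra.
    by apply: filterS ((cvgryPge _).1 ratio_cvgy 3) => n; lra.
  exists ((1 + theta) / 2); first lra.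
  by apply: (cvgr_gt _ ratio_cvg); lra.
exists mu, (maxn N 1); split => // n; rewrite geq_max => /andP[Nn n0].
by rewrite -ratio_seq_ge //; apply/ltW/ratio_gt.
Qed.

Lemma sparse_of_op_linear_sign (mu : Rdefinitions.R) N0 : 1 < mu ->
  (forall n, (N0 <= n)%N -> mu * rR r n <= rR r n.+1) ->
  (forall a, op_linear_sign a r) -> sparse r.
Proof.
move=> mu_gt1 geom op_sign a; split.
  have [op0|[c c0 [[N _ op_gt]|[N _ op_lt]]]] := op_sign a;
    [by left|right; left|right; right].
  - exists N => n /op_gt; rewrite -(ltr0z Rdefinitions.R); apply: le_lt_trans.
    by rewrite mulr_ge0 // ltW.
  - exists N => n /op_lt; rewrite -(ltrz0 Rdefinitions.R) => /lt_le_trans; apply.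
    by rewrite oppr_le0 mulr_ge0 // ltW.
move=> [N op_pos]; have [op0|[c c0 [[N' _ op_gt]|[N' _ op_lt]]]] := op_sign a.
- by have := op_pos N (leqnn N); rewrite op0.
- have [D D_dom] := enumR_shift_dominates r_incr mu_gt1 geom c0.
  exists (maxn D N') => n; rewrite -(ltr_int Rdefinitions.R) -pmulrn.
  apply: lt_trans (D_dom n _ (leq_maxl _ _)) _.
  exact: op_gt (leq_trans (leq_maxr _ _) (leq_addl _ _)).
- have := op_pos _ (leq_maxl N N'); have := op_lt _ (leq_maxr N N').
  have : 0 <= c * rR r (maxn N N') by rewrite mulr_ge0 // ltW.
  rewrite -(ltr0z Rdefinitions.R); lra.
Qed.

End RegularToSparse.

Theorem mainTheorem8 (S : set nat) (r : nat -> nat) :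
  infinite_set S -> increasing_enum S r ->
  (sparse r <-> regular r).
Proof.
move=> _ [r_incr _]; split; first exact: sparse_regular.
move=> r_reg; have [mu [N0 [mu_gt1 geom]]] := regular_geometric r_incr r_reg.
apply: (sparse_of_op_linear_sign r_incr mu_gt1 geom) => a.
exact: regular_op_linear_sign.
Qed.
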